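(* Let $T$ be a hypercyclic bounded operator on a separable Banach space $X$ with $c(T)>0$. Then there is a comeager set of vectors $x\in X$ such that $\|T^ix\|\to0$ as $i\to\infty$ along some set $D_x\subset\mathbb N$ with $\overline{\mathrm{dens}}(D_x)\ge c(T)$.
   Context: $HC(T)$ is the set of vectors with dense $T$-orbit. $\mathcal N_T(x,B)=\{i\in\mathbb N:T^ix\in B\}$; $\overline{\mathrm{dens}}(D)=\limsup_N\frac1N\#(D\cap[1,N])$; $B_R$ is the closed ball of radius $R$ centred at $0$. $c(T)=\sup_{R>0}\sup_{x\in HC(T)}\overline{\mathrm{dens}}\,\mathcal N_T(x,B_R)$. *)

From Stdlib Require Import Reals Lra ClassicalEpsilon.
Open Scope R_scope.

(** Real normed vector spaces (complex spaces are covered by restriction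
    of scalars). *)
Record NormedSpace := mkNormedSpace {
  carrier :> Type;
  vzero : carrier;
  vadd : carrier -> carrier -> carrier;
  vopp : carrier -> carrier;
  vscal : R -> carrier -> carrier;
  vnorm : carrier -> R;
  vadd_assoc : forall x y z, vadd x (vadd y z) = vadd (vadd x y) z;
  vadd_comm : forall x y, vadd x y = vadd y x;
  vadd_0 : forall x, vadd x vzero = x;
  vadd_opp : forall x, vadd x (vopp x) = vzero;
  vscal_1 : forall x, vscal 1 x = x;
  vscal_assoc : forall a b x, vscal a (vscal b x) = vscal (a * b) x;
  vscal_distr_l : forall a x y, vscal a (vadd x y) = vadd (vscal a x) (vscal a y);
  vscal_distr_r : forall a b x, vscal (a + b) x = vadd (vscal a x) (vscal b x);
  vnorm_eq0 : forall x, vnorm x = 0 -> x = vzero;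
  vnorm_scal : forall a x, vnorm (vscal a x) = Rabs a * vnorm x;
  vnorm_triangle : forall x y, vnorm (vadd x y) <= vnorm x + vnorm y
}.

Arguments vzero {_}.
Arguments vadd {_} _ _.
Arguments vopp {_} _.
Arguments vscal {_} _ _.
Arguments vnorm {_} _.

Definition vdist {X : NormedSpace} (x y : X) : R := vnorm (vadd x (vopp y)).

Definition cauchy_seq {X : NormedSpace} (u : nat -> X) : Prop :=
  forall eps, 0 < eps -> exists N, forall m n, (N <= m)%nat -> (N <= n)%nat ->
    vdist (u m) (u n) < eps.

Definition seq_converges {X : NormedSpace} (u : nat -> X) : Prop :=
  exists l : X, forall eps, 0 < eps -> exists N, forall n, (N <= n)%nat ->
    vdist (u n) l < eps.

Definition complete (X : NormedSpace) : Prop :=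
  forall u : nat -> X, cauchy_seq u -> seq_converges u.

Definition separable (X : NormedSpace) : Prop :=
  exists d : nat -> X, forall x eps, 0 < eps -> exists n, vdist x (d n) < eps.

Definition bounded_linear {X : NormedSpace} (T : X -> X) : Prop :=
  (forall x y, T (vadd x y) = vadd (T x) (T y)) /\
  (forall a x, T (vscal a x) = vscal a (T x)) /\
  (exists M, forall x, vnorm (T x) <= M * vnorm x).

Definition iter_op {X : NormedSpace} (T : X -> X) (i : nat) (x : X) : X :=
  Nat.iter i T x.

Definition HC {X : NormedSpace} (T : X -> X) (x : X) : Prop :=
  forall y eps, 0 < eps -> exists i, vdist (iter_op T i x) y < eps.

Definition hypercyclic {X : NormedSpace} (T : X -> X) : Prop :=
  exists x, HC T x.

Fixpoint count_upto (D : nat -> Prop) (N : nat) : nat :=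
  match N with
  | O => O
  | S n => (count_upto D n +
            (if excluded_middle_informative (D (S n)) then 1 else 0))%nat
  end.

(** the ratio #(D ∩ [1,N]) / N, indexed by n = N - 1 (N >= 1) *)
Definition dens_ratio (D : nat -> Prop) (n : nat) : R :=
  INR (count_upto D (S n)) / INR (S n).

Definition is_limsup (u : nat -> R) (l : R) : Prop :=
  (forall eps, 0 < eps -> forall M, exists N, (M <= N)%nat /\ l - eps < u N) /\
  (forall eps, 0 < eps -> exists M, forall N, (M <= N)%nat -> u N < l + eps).

(** upper density: limsup_N #(D ∩ [1,N]) / N (exists and is unique since the
    ratios lie in [0,1]). *)
Definition updens (D : nat -> Prop) : R :=
  epsilon (inhabits 0) (fun l => is_limsup (dens_ratio D) l).

Definition return_set {X : NormedSpace} (T : X -> X) (x : X) (Rad : R) : nat -> Prop :=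
  fun i => vnorm (iter_op T i x) <= Rad.

Definition cT {X : NormedSpace} (T : X -> X) : R :=
  epsilon (inhabits 0)
    (is_lub (fun d => exists Rad x, 0 < Rad /\ HC T x /\
                        d = updens (return_set T x Rad))).

Definition open_set {X : NormedSpace} (U : X -> Prop) : Prop :=
  forall x, U x -> exists r, 0 < r /\ forall y, vdist y x < r -> U y.

Definition dense_set {X : NormedSpace} (U : X -> Prop) : Prop :=
  forall y eps, 0 < eps -> exists x, U x /\ vdist x y < eps.

Definition comeager {X : NormedSpace} (G : X -> Prop) : Prop :=
  exists U : nat -> X -> Prop,
    (forall n, open_set (U n) /\ dense_set (U n)) /\
    (forall x, (forall n, U n x) -> G x).

Definition tends_to_zero_along {X : NormedSpace} (T : X -> X) (x : X)
  (D : nat -> Prop) : Prop :=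
  forall eps, 0 < eps -> exists N, forall i, D i -> (N <= i)%nat ->
    vnorm (iter_op T i x) < eps.

From Pilot Require Import Defs.
From Stdlib Require Import Reals Lra Lia Classical ClassicalEpsilon.
From Coquelicot Require Lim_seq.
Open Scope R_scope.

(* For k, N let U_{k,N} be the set of x such that, for some n >= N, more than
   (c(T) - 1/(k+1)) n of the times i <= n satisfy ||T^i x|| < 1/(k+1).  It is
   open because each T^i is continuous, and dense because suitable multiples
   a T^j x0 of hypercyclic vectors x0 whose return sets to a ball have upper
   density close to c(T) approximate every vector.  For x in all U_{n,n} the
   sets of small times along x can be glued diagonally into a single set of
   upper density >= c(T) along which T^i x -> 0. *)

Section NormedSpaceFacts.
Variable X : NormedSpace.
Implicit Types x y : X.

Lemma vadd_0l x : vadd vzero x = x.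
Proof. rewrite vadd_comm; apply vadd_0. Qed.

Lemma vscal_0 x : vscal 0 x = vzero.
Proof.
  set (w := vscal 0 x).
  assert (Hww : w = vadd w w) by (unfold w; rewrite <- vscal_distr_r; f_equal; ring).
  transitivity (vadd (vadd w w) (vopp w)).
  - rewrite <- vadd_assoc, vadd_opp, vadd_0; reflexivity.
  - rewrite <- Hww; apply vadd_opp.
Qed.

Lemma vopp_scal x : vopp x = vscal (-1) x.
Proof.
  assert (Hx : vadd x (vscal (-1) x) = vzero).
  { rewrite <- (vscal_1 _ x) at 1. rewrite <- vscal_distr_r.
    replace (1 + -1) with 0 by ring. apply vscal_0. }
  rewrite <- (vadd_0 _ (vopp x)), <- Hx, vadd_assoc.
  rewrite (vadd_comm _ (vopp x) x), vadd_opp, vadd_0l; reflexivity.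
Qed.

Lemma vnorm_0 : vnorm (@vzero X) = 0.
Proof. rewrite <- (vscal_0 vzero), vnorm_scal, Rabs_R0; ring. Qed.

Lemma vnorm_opp x : vnorm (vopp x) = vnorm x.
Proof.
  rewrite vopp_scal, vnorm_scal, Rabs_left by lra; ring.
Qed.

Lemma vnorm_ge0 x : 0 <= vnorm x.
Proof.
  pose proof (vnorm_triangle _ x (vopp x)) as Htri.
  rewrite vadd_opp, vnorm_0, vnorm_opp in Htri; lra.
Qed.

Lemma vnorm_le_vdist x y : vnorm x <= vnorm y + vdist x y.
Proof.
  assert (Hx : vadd y (vadd x (vopp y)) = x).
  { rewrite (vadd_comm _ x), vadd_assoc, vadd_opp, vadd_0l; reflexivity. }
  unfold vdist; rewrite <- Hx at 1; apply vnorm_triangle.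
Qed.

Lemma vdist_scal a x y : a <> 0 ->
  vdist (vscal a x) y = Rabs a * vdist x (vscal (/ a) y).
Proof.
  intro Ha. unfold vdist. rewrite <- vnorm_scal. f_equal.
  rewrite vscal_distr_l, !vopp_scal, !vscal_assoc.
  do 2 f_equal; field; exact Ha.
Qed.

Lemma open_near_upto (P : nat -> X -> Prop) :
  (forall i, Defs.open_set (P i)) -> forall x n, exists r, 0 < r /\
    forall y, vdist y x < r -> forall i, (i <= n)%nat -> P i x -> P i y.
Proof.
  intros Hopen x n. induction n as [|n [r [Hr Hnear]]].
  - destruct (classic (P 0%nat x)) as [Hx|Hx].
    + destruct (Hopen 0%nat x Hx) as [r [Hr Hball]].
      exists r; split; [exact Hr|]. intros y Hy i Hi _.
      replace i with 0%nat by lia; auto.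
    + exists 1; split; [lra|]. intros y _ i Hi HPx.
      replace i with 0%nat in HPx by lia; contradiction.
  - destruct (classic (P (S n) x)) as [Hx|Hx].
    + destruct (Hopen (S n) x Hx) as [r' [Hr' Hball]].
      exists (Rmin r r'); split; [now apply Rmin_pos|].
      intros y Hy i Hi HPx. pose proof (Rmin_l r r'); pose proof (Rmin_r r r').
      destruct (Nat.eq_dec i (S n)) as [->|Hne]; [apply Hball; lra|].
      apply (Hnear y); [lra|lia|exact HPx].
    + exists r; split; [exact Hr|]. intros y Hy i Hi HPx.
      destruct (Nat.eq_dec i (S n)) as [->|Hne]; [contradiction|].
      apply (Hnear y); [lra|lia|exact HPx].
Qed.

End NormedSpaceFacts.

Section Iterates.
Variables (X : NormedSpace) (T : X -> X).
Hypothesis HT : bounded_linear T.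

Lemma iter_op_add i j (x : X) : iter_op T i (iter_op T j x) = iter_op T (i + j) x.
Proof. unfold iter_op; rewrite Nat.iter_add; reflexivity. Qed.

Lemma iter_op_vadd i (x y : X) :
  iter_op T i (vadd x y) = vadd (iter_op T i x) (iter_op T i y).
Proof.
  destruct HT as [Hadd _]. unfold iter_op.
  induction i as [|i IH]; simpl; [reflexivity|]. rewrite IH; apply Hadd.
Qed.

Lemma iter_op_vscal i a (x : X) : iter_op T i (vscal a x) = vscal a (iter_op T i x).
Proof.
  destruct HT as [_ [Hscal _]]. unfold iter_op.
  induction i as [|i IH]; simpl; [reflexivity|]. rewrite IH; apply Hscal.
Qed.

Lemma iter_op_vdist_bound : exists K, 0 < K /\
  forall i (x y : X), vdist (iter_op T i x) (iter_op T i y) <= K ^ i * vdist x y.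
Proof.
  destruct HT as [_ [_ [M HM]]]. exists (Rabs M + 1).
  split; [pose proof (Rabs_pos M); lra|]. intros i x y.
  unfold vdist. rewrite !vopp_scal, <- iter_op_vscal, <- iter_op_vadd.
  generalize (vadd x (vscal (-1) y)) as v; intro v. unfold iter_op.
  induction i as [|i IH]; simpl; [lra|].
  apply Rle_trans with (M * vnorm (Nat.iter i T v)); [apply HM|].
  apply Rle_trans with ((Rabs M + 1) * vnorm (Nat.iter i T v)).
  - apply Rmult_le_compat_r; [apply vnorm_ge0|]. pose proof (Rle_abs M); lra.
  - rewrite Rmult_assoc. apply Rmult_le_compat_l; [pose proof (Rabs_pos M); lra|exact IH].
Qed.

Lemma open_iter_norm_lt i e : Defs.open_set (fun x : X => vnorm (iter_op T i x) < e).
Proof.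
  destruct iter_op_vdist_bound as [K [HK Hlip]]. intros x Hx.
  assert (HKi : 0 < K ^ i) by (apply pow_lt; exact HK).
  exists ((e - vnorm (iter_op T i x)) / K ^ i). split.
  - apply Rdiv_lt_0_compat; lra.
  - intros y Hy.
    pose proof (vnorm_le_vdist X (iter_op T i y) (iter_op T i x)).
    pose proof (Hlip i y x).
    apply (Rmult_lt_compat_l (K ^ i)) in Hy; [|exact HKi].
    replace (K ^ i * ((e - vnorm (iter_op T i x)) / K ^ i))
      with (e - vnorm (iter_op T i x)) in Hy by (field; lra).
    lra.
Qed.

End Iterates.

Lemma count_upto_le (P : nat -> Prop) n : (count_upto P n <= n)%nat.
Proof. induction n; simpl; [lia|]. destruct excluded_middle_informative; lia. Qed.

Lemma count_upto_mono (P Q : nat -> Prop) n :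
  (forall i, (1 <= i <= n)%nat -> P i -> Q i) ->
  (count_upto P n <= count_upto Q n)%nat.
Proof.
  induction n as [|n IH]; intro HPQ; simpl; [lia|].
  assert (count_upto P n <= count_upto Q n)%nat
    by (apply IH; intros; apply HPQ; [lia|assumption]).
  destruct (excluded_middle_informative (P (S n))) as [HP|HP];
  destruct (excluded_middle_informative (Q (S n))) as [HQ|HQ]; try lia.
  exfalso; apply HQ, HPQ; [lia|exact HP].
Qed.

Lemma count_upto_shift (P : nat -> Prop) n j :
  (count_upto P (n + j) <= count_upto (fun i => P (i + j)%nat) n + j)%nat.
Proof.
  induction n as [|n IH]; simpl; [apply count_upto_le|].
  destruct (excluded_middle_informative (P (S (n + j)))) as [HP|HP];
  destruct (excluded_middle_informative (P (S n + j)%nat)) as [HP'|HP']; try lia;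
  exfalso; auto.
Qed.

Lemma count_upto_block (P Q : nat -> Prop) a m :
  (forall i, (a < i <= a + m)%nat -> P i -> Q i) ->
  (count_upto P (a + m) <= count_upto Q (a + m) + a)%nat.
Proof.
  induction m as [|m IH]; intro HPQ.
  - rewrite Nat.add_0_r. pose proof (count_upto_le P a); lia.
  - rewrite Nat.add_succ_r; simpl.
    assert (count_upto P (a + m) <= count_upto Q (a + m) + a)%nat
      by (apply IH; intros; apply HPQ; [lia|assumption]).
    destruct (excluded_middle_informative (P (S (a + m)))) as [HP|HP];
    destruct (excluded_middle_informative (Q (S (a + m)))) as [HQ|HQ]; try lia.
    exfalso; apply HQ, HPQ; [lia|exact HP].
Qed.

Lemma dens_ratio_count D n : dens_ratio D n * INR (S n) = INR (count_upto D (S n)).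
Proof. unfold dens_ratio. field. apply not_0_INR; lia. Qed.

Lemma dens_ratio_bounds D n : 0 <= dens_ratio D n <= 1.
Proof.
  pose proof (dens_ratio_count D n) as Hcount.
  pose proof (le_INR _ _ (count_upto_le D (S n))).
  pose proof (pos_INR (count_upto D (S n))).
  assert (0 < INR (S n)) by (apply lt_0_INR; lia).
  split; nra.
Qed.

Lemma updens_spec D : is_limsup (dens_ratio D) (updens D).
Proof.
  unfold updens. apply epsilon_spec.
  destruct (Lim_seq.ex_LimSup_seq (dens_ratio D)) as [[l| |] Hl]; simpl in Hl.
  - exists l. split.
    + intros eps Heps. exact (proj1 (Hl (mkposreal eps Heps))).
    + intros eps Heps. exact (proj2 (Hl (mkposreal eps Heps))).
  - destruct (Hl 2 0%nat) as [n [_ Hn]]. pose proof (dens_ratio_bounds D n). lra.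
  - destruct (Hl (-1)) as [N HN]. pose proof (HN N (le_n _)).
    pose proof (dens_ratio_bounds D N). lra.
Qed.

Lemma updens_le1 D : updens D <= 1.
Proof.
  apply Rnot_lt_le; intro Hgt.
  destruct (proj1 (updens_spec D) (updens D - 1) ltac:(lra) 0%nat) as [N [_ HN]].
  pose proof (dens_ratio_bounds D N). lra.
Qed.

Lemma updens_frequently D eps M : 0 < eps ->
  exists n, (M < n)%nat /\ (updens D - eps) * INR n < INR (count_upto D n).
Proof.
  intro Heps. destruct (proj1 (updens_spec D) eps Heps M) as [N [HMN HN]].
  exists (S N). split; [lia|].
  rewrite <- dens_ratio_count. apply Rmult_lt_compat_r; [apply lt_0_INR; lia|exact HN].
Qed.

Lemma updens_ge_frequently D c :
  (forall eps, 0 < eps -> forall M, exists n,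
     (M < n)%nat /\ (c - eps) * INR n <= INR (count_upto D n)) ->
  c <= updens D.
Proof.
  intro Hfreq. apply Rnot_lt_le; intro Hlt.
  set (eps := (c - updens D) / 2).
  destruct (proj2 (updens_spec D) eps ltac:(unfold eps; lra)) as [M HM].
  destruct (Hfreq eps ltac:(unfold eps; lra) M) as [[|n] [HMn Hn]]; [lia|].
  specialize (HM n ltac:(lia)). rewrite <- dens_ratio_count in Hn.
  apply Rmult_le_reg_r in Hn; [unfold eps in *; lra|apply lt_0_INR; lia].
Qed.

Definition inv_succ (k : nat) : R := / INR (S k).

Lemma inv_succ_pos k : 0 < inv_succ k.
Proof. apply Rinv_0_lt_compat, lt_0_INR; lia. Qed.

Lemma inv_succ_mul k : inv_succ k * INR (S k) = 1.
Proof. unfold inv_succ. field. apply not_0_INR; lia. Qed.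

Lemma inv_succ_le1 k : inv_succ k <= 1.
Proof. unfold inv_succ. rewrite <- Rinv_1. apply Rinv_le_contravar; [lra|]. apply (le_INR 1); lia. Qed.

Lemma inv_succ_antitone k p : (k <= p)%nat -> inv_succ p <= inv_succ k.
Proof.
  intro Hkp. apply Rinv_le_contravar; [apply lt_0_INR; lia|apply le_INR; lia].
Qed.

Lemma inv_succ_lt eps : 0 < eps -> exists k, inv_succ k < eps.
Proof.
  intro Heps. destruct (archimed_cor1 eps Heps) as [[|k] [Hk Hpos]]; [lia|].
  exists k; exact Hk.
Qed.

Lemma fast_increasing_witnesses (P : nat -> nat -> Prop) :
  (forall k N, exists n, (N <= n)%nat /\ P k n) ->
  exists nn : nat -> nat,
    forall k, (S k * S (nn k) <= nn (S k))%nat /\ P k (nn (S k)).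
Proof.
  intro Hwit.
  destruct (choice (fun kN n => (snd kN <= n)%nat /\ P (fst kN) n)) as [g Hg].
  { intros [k N]; exact (Hwit k N). }
  exists (fix nn k := match k with
                      | O => O
                      | S k' => g (k', S k' * S (nn k'))%nat
                      end).
  intro k; exact (Hg (k, _)).
Qed.

Definition diagonal_set (nn : nat -> nat) (A : nat -> nat -> Prop) (i : nat) : Prop :=
  exists k, (nn k < i <= nn (S k))%nat /\ A k i.

Section Diagonal.
Variables (nn : nat -> nat) (A : nat -> nat -> Prop).
Hypothesis nn_increasing : forall k, (nn k < nn (S k))%nat.

Lemma count_diagonal_set k :
  (count_upto (A k) (nn (S k)) <= count_upto (diagonal_set nn A) (nn (S k)) + nn k)%nat.
Proof.
  pose proof (nn_increasing k).
  replace (nn (S k)) with (nn k + (nn (S k) - nn k))%nat by lia.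
  apply count_upto_block. intros i Hi HA. exists k; split; [lia|exact HA].
Qed.

Hypothesis A_antitone : forall k i, A (S k) i -> A k i.

Lemma diagonal_set_eventually k i :
  diagonal_set nn A i -> (S (nn k) <= i)%nat -> A k i.
Proof.
  intros [j [Hj HA]] Hki.
  assert (Hle : forall p q, (p <= q)%nat -> (nn p <= nn q)%nat).
  { intros p q Hpq; induction Hpq; [lia|]. pose proof (nn_increasing m); lia. }
  assert (Hkj : (k <= j)%nat).
  { destruct (Nat.le_gt_cases k j) as [|Hjk]; [assumption|].
    pose proof (Hle (S j) k Hjk); lia. }
  clear Hj Hki. induction Hkj; [exact HA|]. apply IHHkj, A_antitone, HA.
Qed.

End Diagonal.

(* Choosing n_{k+1} >= (k+1)(n_k + 1) makes the first n_k terms negligible at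
   scale n_{k+1}, so gluing the blocks (n_k, n_{k+1}] of the sets A k keeps the
   density c while D eventually lies in every A k. *)
Lemma diagonal_density (A : nat -> nat -> Prop) (c : R) :
  (forall k i, A (S k) i -> A k i) ->
  (forall k N, exists n, (N <= n)%nat /\
     (c - inv_succ k) * INR n < INR (count_upto (A k) n)) ->
  exists D, c <= updens D /\
    forall k, exists N, forall i, D i -> (N <= i)%nat -> A k i.
Proof.
  intros Hanti Hfreq.
  destruct (fast_increasing_witnesses _ Hfreq) as [nn Hnn].
  assert (Hinc : forall k, (nn k < nn (S k))%nat)
    by (intro k; pose proof (proj1 (Hnn k)); nia).
  exists (diagonal_set nn A). split.
  - apply updens_ge_frequently. intros eps Heps M.
    destruct (inv_succ_lt (eps / 2)) as [k0 Hk0]; [lra|].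
    set (k := Nat.max k0 M).
    destruct (Hnn k) as [Hgrow Hcount].
    exists (nn (S k)). split; [unfold k in *; nia|].
    pose proof (le_INR _ _ (count_diagonal_set nn A Hinc k)) as Hdiag.
    rewrite plus_INR in Hdiag.
    assert (Hsmall : INR (nn k) <= inv_succ k * INR (nn (S k))).
    { apply le_INR in Hgrow. rewrite mult_INR in Hgrow.
      rewrite S_INR with (n := nn k) in Hgrow.
      apply (Rmult_le_compat_l (inv_succ k)) in Hgrow; [|left; apply inv_succ_pos].
      rewrite <- Rmult_assoc, inv_succ_mul in Hgrow. lra. }
    pose proof (inv_succ_antitone k0 k ltac:(unfold k; lia)).
    assert (0 <= (eps - 2 * inv_succ k) * INR (nn (S k)))
      by (apply Rmult_le_pos; [lra|apply pos_INR]).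
    lra.
  - intro k. exists (S (nn k)). intros i HD Hi.
    exact (diagonal_set_eventually nn A Hinc Hanti k i HD Hi).
Qed.

Section OftenSmall.
Variables (X : NormedSpace) (T : X -> X).
Hypothesis HT : bounded_linear T.
Hypothesis Hhc : hypercyclic T.

Lemma cT_lub : is_lub (fun d => exists Rad x, 0 < Rad /\ HC T x /\
                          d = updens (return_set T x Rad)) (cT T).
Proof.
  unfold cT. apply epsilon_spec.
  destruct completeness with (E := fun d => exists Rad x, 0 < Rad /\ HC T x /\
                                     d = updens (return_set T x Rad)) as [l Hl];
    [|idtac|exists l; exact Hl].
  - exists 1. intros d [Rad [x [_ [_ ->]]]]. apply updens_le1.
  - destruct Hhc as [x Hx]. exists (updens (return_set T x 1)), 1, x.
    split; [lra|auto].
Qed.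

Lemma cT_approx e : 0 < e -> exists Rad x, 0 < Rad /\ HC T x /\
  cT T - e < updens (return_set T x Rad).
Proof.
  intro He. destruct cT_lub as [_ Hleast]. apply NNPP; intro Hnone.
  enough (cT T <= cT T - e) by lra.
  apply Hleast. intros d [Rad [x [HRad [Hx ->]]]].
  apply Rnot_lt_le; intro Hlt. apply Hnone. exists Rad, x; auto.
Qed.

Definition small_times (k : nat) (x : X) (i : nat) : Prop :=
  vnorm (iter_op T i x) < inv_succ k.

Definition often_small (c : R) (k N : nat) (x : X) : Prop :=
  exists n, (N <= n)%nat /\ (c - inv_succ k) * INR n < INR (count_upto (small_times k x) n).

Lemma small_times_succ k x i : small_times (S k) x i -> small_times k x i.
Proof. unfold small_times. pose proof (inv_succ_antitone k (S k) ltac:(lia)). lra. Qed.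

Lemma often_small_mono c k k' N N' x : (k <= k')%nat -> (N <= N')%nat ->
  often_small c k' N' x -> often_small c k N x.
Proof.
  intros Hk HN [n [Hn Hcount]]. exists n. split; [lia|].
  pose proof (inv_succ_antitone k k' Hk). pose proof (pos_INR n).
  apply Rle_lt_trans with ((c - inv_succ k') * INR n);
    [apply Rmult_le_compat_r; lra|].
  apply Rlt_le_trans with (1 := Hcount), le_INR, count_upto_mono.
  intros i _. unfold small_times. lra.
Qed.

Lemma open_often_small c k N : Defs.open_set (often_small c k N).
Proof.
  intros x [n [HN Hcount]].
  destruct (open_near_upto X (fun i y => small_times k y i)) with (x := x) (n := n)
    as [r [Hr Hnear]].
  { intro i. apply open_iter_norm_lt, HT. }
  exists r. split; [exact Hr|]. intros y Hy. exists n. split; [exact HN|].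
  apply Rlt_le_trans with (1 := Hcount), le_INR, count_upto_mono.
  intros i Hi. apply Hnear; [exact Hy|lia].
Qed.

(* Scaling by a = e/(2 Rad) sends the times where the orbit of x lies in B_Rad
   to times where it lies in B_{e/2}; shifting the orbit by j costs at most j
   such times, which is negligible against e n once n >= 3 (k+1) j. *)
Lemma often_small_scaled_orbit c k N x Rad j :
  0 < Rad -> 0 <= c -> c - inv_succ k / 2 < updens (return_set T x Rad) ->
  often_small c k N (vscal (inv_succ k / (2 * Rad)) (iter_op T j x)).
Proof.
  intros HRad Hc Hdens.
  set (e := inv_succ k) in *. set (a := e / (2 * Rad)).
  pose proof (inv_succ_pos k) as He. pose proof (inv_succ_le1 k) as He1.
  pose proof (inv_succ_mul k) as Hek. fold e in He, He1, Hek.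
  assert (Ha : 0 < a) by (unfold a; apply Rdiv_lt_0_compat; lra).
  destruct (updens_frequently (return_set T x Rad)
              (updens (return_set T x Rad) - (c - e / 2))
              (N + j + 3 * S k * j)) as [m [Hm Hcount]]; [lra|].
  exists (m - j)%nat. split; [lia|].
  set (n := (m - j)%nat).
  assert (Hshift : (count_upto (return_set T x Rad) m <=
                    count_upto (small_times k (vscal a (iter_op T j x))) n + j)%nat).
  { replace m with (n + j)%nat by (unfold n; lia).
    eapply Nat.le_trans; [apply count_upto_shift|].
    apply Nat.add_le_mono_r, count_upto_mono. intros i _ Hi.
    unfold return_set, small_times in *.
    rewrite iter_op_vscal, iter_op_add, vnorm_scal, Rabs_right by (auto; lra).
    fold e. apply Rle_lt_trans with (a * Rad); [apply Rmult_le_compat_l; lra|].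
    unfold a. replace (e / (2 * Rad) * Rad) with (e / 2) by (field; lra). lra. }
  apply le_INR in Hshift. rewrite plus_INR in Hshift.
  assert (Hnj : INR m = INR n + INR j) by (rewrite <- plus_INR; f_equal; unfold n; lia).
  assert (Hjn : 3 * INR j <= e * INR n).
  { assert (H3 : (3 * S k * j <= n)%nat) by (unfold n; lia).
    apply le_INR in H3. rewrite !mult_INR in H3.
    replace (INR 3) with 3 in H3 by (simpl; ring).
    apply (Rmult_le_compat_l e) in H3; [|lra].
    replace (e * (3 * INR (S k) * INR j)) with (3 * INR j * (e * INR (S k))) in H3
      by ring.
    rewrite Hek in H3. lra. }
  pose proof (pos_INR j). pose proof (pos_INR n).
  assert (0 <= c * INR j) by nra. assert (e * INR j <= INR j) by nra.
  rewrite Hnj in Hcount. fold e. lra.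
Qed.

Lemma dense_often_small k N : 0 < cT T -> Defs.dense_set (often_small (cT T) k N).
Proof.
  intros Hc y eps Heps.
  pose proof (inv_succ_pos k) as He.
  destruct (cT_approx (inv_succ k / 2)) as [Rad [x [HRad [Hx Hdens]]]]; [lra|].
  set (a := inv_succ k / (2 * Rad)).
  assert (Ha : 0 < a) by (unfold a; apply Rdiv_lt_0_compat; lra).
  destruct (Hx (vscal (/ a) y) (eps / a)) as [j Hj]; [apply Rdiv_lt_0_compat; lra|].
  exists (vscal a (iter_op T j x)). split.
  - apply often_small_scaled_orbit; [exact HRad|lra|exact Hdens].
  - rewrite vdist_scal, Rabs_right by lra.
    apply (Rmult_lt_compat_l a) in Hj; [|exact Ha].
    replace (a * (eps / a)) with eps in Hj by (field; lra). exact Hj.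
Qed.

End OftenSmall.

Theorem proposition4 (X : NormedSpace) (T : X -> X)
  (HX : complete X) (Hsep : separable X) (HT : bounded_linear T)
  (Hhc : hypercyclic T) (Hc : 0 < cT T) :
  comeager (fun x : X => exists D : nat -> Prop,
              cT T <= updens D /\ tends_to_zero_along T x D).
Proof.
  exists (fun n => often_small X T (cT T) n n). split.
  - intro n. split; [apply open_often_small | apply dense_often_small]; assumption.
  - intros x Hx.
    destruct (diagonal_density (fun k => small_times X T k x) (cT T))
      as [D [Hdens Hsmall]].
    + intros k i. apply small_times_succ.
    + intros k N. apply (often_small_mono X T _ k (Nat.max k N) N (Nat.max k N));
        [lia|lia|apply Hx].
    + exists D. split; [exact Hdens|]. intros eps Heps.
      destruct (inv_succ_lt eps Heps) as [k Hk]. destruct (Hsmall k) as [N HN].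
      exists N. intros i HD Hi. specialize (HN i HD Hi). unfold small_times in HN. lra.
Qed.
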